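(* Let $H$ be the lower Vietoris monad on $\mathbf{Top}$. For every topological space $X$, the equalizer of $\eta_{HX},H\eta_X:HX\to HHX$ is the subspace $DX\subseteq HX$ consisting of the irreducible closed subsets of $X$, with $\theta_X:DX\to HX$ the inclusion.
   Context: $HX$ is the set of closed subsets of $X$ (including $\emptyset$) with topology generated by the sets $\{C: C\cap U\neq\emptyset\}$ for $U\subseteq X$ open; $\eta_X(x)=\overline{\{x\}}$; $\mu_X(\mathcal{C})=\overline{\bigcup_{C\in\mathcal{C}}C}$; $Hf(C)=\overline{f(C)}$. A closed subset $C$ is irreducible if it is nonempty and is not the union of two closed proper subsets of $C$. *)

From HB Require Import structures.
From mathcomp Require Import all_boot all_order all_algebra.
From mathcomp Require Import all_classical all_reals all_analysis.
Set Implicit Arguments. Unset Strict Implicit. Unset Printing Implicit Defensive.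
Local Open Scope classical_set_scope.

(** The lower Vietoris space HX : closed subsets of X (including the empty set),
    topologized by the subbasis { C | C meets U }, U open in X. *)
Record hspace (X : topologicalType) := HSet {
  hval : set X;
  hval_closed : closed hval }.

Section LowerVietoris.
Variable X : topologicalType.

HB.instance Definition _ := gen_eqMixin (hspace X).
HB.instance Definition _ := gen_choiceMixin (hspace X).
HB.instance Definition _ := isPointed.Build (hspace X) (HSet (@closed0 X)).

Definition hsubbase (U : set X) : set (hspace X) :=
  [set C | hval C `&` U !=set0].

HB.instance Definition _ := isSubBaseTopological.Build (hspace X)
  (fun U : set X => open U) hsubbase.

Definition heta (x : X) : hspace X := HSet (@closed_closure X [set x]).

(** A closed set C is irreducible if nonempty and not the union of two
    closed proper subsets of C (closed in C = closed in X, since C is closed). *)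
Definition irreducible (C : set X) : Prop :=
  C !=set0 /\
  forall A B : set X, closed A -> closed B -> A `<=` C -> B `<=` C ->
    C = A `|` B -> A = C \/ B = C.

End LowerVietoris.

Definition hmap (X Y : topologicalType) (f : X -> Y) (C : hspace X) : hspace Y :=
  HSet (@closed_closure Y (f @` hval C)).

(** D X, the subspace of HX of irreducible closed subsets (as a subset of HX;
    the inclusion theta_X is the subspace inclusion). *)
Definition Dset (X : topologicalType) : set (hspace X) :=
  [set C | irreducible (hval C)].

From HB Require Import structures.
From mathcomp Require Import all_boot all_order all_algebra.
From mathcomp Require Import all_classical all_reals all_analysis.
From mathcomp Require Import finmap.

(* In HX the specialization order is inclusion, so eta_{HX} C, the closure of
   {C}, is the set of closed subsets of C; hence eta_{HX} C = H eta_X C exactly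
   when C lies in the closure of { closure {x} | x in C }.  A basic
   neighbourhood of C is a finite intersection of sets { D | D meets U }, with
   the U open and meeting C; it contains some closure {x} with x in C iff the U
   have a common point in C, and that this holds for every finite family of
   such U is irreducibility of C.  The universal property is that of a
   subspace. *)

Set Implicit Arguments. Unset Strict Implicit. Unset Printing Implicit Defensive.
Local Open Scope classical_set_scope.

Section TopologyFacts.
Variable T : topologicalType.

Lemma closure_subset_closure (A B : set T) :
  A `<=` closure B -> closure A `<=` closure B.
Proof. by move=> /closureS; have /closure_id <- := @closed_closure T B. Qed.

Lemma open_closure_set1 (x y : T) (U : set T) :
  closure [set x] y -> open U -> U y -> U x.
Proof.
by move=> xy oU Uy; have [z [-> //]] := xy U (open_nbhs_nbhs (conj oU Uy)).
Qed.

Lemma continuous_into_subspace (Z : topologicalType) (A : set T) (f : Z -> T) :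
  continuous f -> (forall z, A (f z)) -> continuous (f : Z -> subspace A).
Proof.
move=> cf Af z W fzW.
have AW : within A (nbhs (f z)) W by rewrite (nbhs_subspace_in (Af z)).
have zW : nbhs z (f @^-1` [set y | A y -> W y]) := cf z _ AW.
by apply: filterS zW => z' /(_ (Af z')).
Qed.

Lemma irreducibleP (C : set T) : closed C ->
  irreducible C <-> C !=set0 /\
    forall U V : set T, open U -> open V ->
      C `&` U !=set0 -> C `&` V !=set0 -> C `&` (U `&` V) !=set0.
Proof.
move=> cC; split=> [[C0 irrC]|[C0 meetUV]].
  split=> // U V oU oV [u [Cu Uu]] [v [Cv Vv]]; apply: contrapT => CUV0.
  have cCU : closed (C `&` ~` U) by apply: closedI; rewrite ?closedC.
  have cCV : closed (C `&` ~` V) by apply: closedI; rewrite ?closedC.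
  have CE : C = (C `&` ~` U) `|` (C `&` ~` V).
    apply/seteqP; split=> [x Cx|x [[]|[]] //].
    have [Ux|] := pselect (U x); last by left.
    have [Vx|] := pselect (V x); last by right.
    by exfalso; apply: CUV0; exists x.
  have [CUE|CVE] := irrC _ _ cCU cCV (@subIsetl _ _ _) (@subIsetl _ _ _) CE.
  - by have [] : (C `&` ~` U) u by rewrite CUE.
  - by have [] : (C `&` ~` V) v by rewrite CVE.
split=> // A B cA cB AC BC CE; apply: contrapT => /not_orP[AC' BC'].
have meetC (E : set T) : E `<=` C -> E <> C -> C `&` ~` E !=set0.
  move=> EC EC'; apply: contrapT => CE0; apply: EC'.
  apply/seteqP; split=> // x Cx; apply: contrapT => Ex.
  by apply: CE0; exists x.
have [x [Cx [Ax Bx]]] := meetUV _ _ (closed_openC cA) (closed_openC cB)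
  (meetC _ AC AC') (meetC _ BC BC').
by move: Cx; rewrite CE => -[].
Qed.

Lemma irreducible_meet_bigcap (C : set T) (s : seq (set T)) :
  closed C -> irreducible C -> {in s, forall U, open U /\ C `&` U !=set0} ->
  C `&` \bigcap_(U in [set` s]) U !=set0.
Proof.
move=> cC /(irreducibleP cC)[C0 meetUV]; rewrite bigcap_seq.
elim: s => [_|U s IHs sU]; first by rewrite big_nil setIT.
have [oU CU] := sU U (mem_head _ _).
have {}sU : {in s, forall V, open V /\ C `&` V !=set0}.
  by move=> V Vs; apply: sU; rewrite in_cons Vs orbT.
rewrite big_cons; apply: meetUV => //; last exact: IHs.
rewrite big_seq; apply: big_ind => [|V W|V /sU[]] //.
- exact: openT.
- exact: openI.
Qed.

End TopologyFacts.

Lemma hval_inj (X : topologicalType) : injective (@hval X).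
Proof. by case=> [A cA] [B cB] /= AB; subst B; congr HSet. Qed.

Section LowerVietoris.
Variable X : topologicalType.

Lemma open_hsubbase (U : set X) : open U -> open (hsubbase U).
Proof.
move=> oU; exists [set hsubbase U]; last exact: bigcup_set1.
by move=> _ ->; apply: finI_from1.
Qed.

Lemma nbhs_hspace (C : hspace X) (B : set (hspace X)) : nbhs C B ->
  exists2 s : seq (set X), {in s, forall U, open U /\ hval C `&` U !=set0} &
    \bigcap_(U in [set` s]) hsubbase U `<=` B.
Proof.
case=> _ [[Ds sDs] <- [W DsW WC] sB].
have [E sE EW] := sDs W DsW; exists (E : seq (set X)).
  by move=> U EU; split; [exact/set_mem/sE | by move: WC; rewrite -EW; apply].
by rewrite EW => D WD; apply: sB; exists W.
Qed.

Lemma nbhs_hspace_subset (B : set (hspace X)) (D C : hspace X) :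
  nbhs D B -> hval D `<=` hval C -> B C.
Proof.
move=> /nbhs_hspace[s sD sB] DC; apply: sB => U /sD[_ [x [Dx Ux]]].
by exists x; split; first exact: DC.
Qed.

Lemma hspace_closure_set1 (D C : hspace X) :
  hval D `<=` hval C -> closure [set C] D.
Proof. by move=> DC B /nbhs_hspace_subset/(_ DC) BC; exists C. Qed.

Lemma heta_hmap_heta_eq (C : hspace X) :
  heta C = hmap (@heta X) C <-> closure (@heta X @` hval C) C.
Proof.
split=> [/(congr1 (@hval _)) /= <-|CE]; first exact: subset_closure.
apply: hval_inj; apply/seteqP; split=> /=; apply: closure_subset_closure.
  by move=> D ->.
move=> _ [x Cx <-]; apply: hspace_closure_set1 => /=.
have xC : [set x] `<=` hval C by move=> y ->.
by move=> y /(closureS xC) /hval_closed.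
Qed.

Lemma closure_heta_irreducible (C : hspace X) :
  closure (@heta X @` hval C) C <-> irreducible (hval C).
Proof.
have cC := @hval_closed X C.
split=> [CE|iC B /nbhs_hspace[s sC sB]]; last first.
  have [x [Cx sx]] := irreducible_meet_bigcap cC iC sC.
  exists (heta x); split; first by exists x.
  by apply: sB => U Us; exists x; split; [exact: subset_closure | exact: sx].
apply/(irreducibleP cC); split.
  by have [_ [[x Cx _] _]] := CE setT filterT; exists x.
move=> U V oU oV CU CV.
have CUV : nbhs C (hsubbase U `&` hsubbase V).
  by apply: open_nbhs_nbhs; split; [apply: openI; exact: open_hsubbase | split].
have [_ [[x Cx <-] [[y [xy Uy]] [z [xz Vz]]]]] := CE _ CUV.
by exists x; split; last split; [| exact: open_closure_set1 xy oU Uy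
  | exact: open_closure_set1 xz oV Vz].
Qed.

End LowerVietoris.

Theorem theorem5p8 (X : topologicalType) :
  [set C : hspace X | @heta (hspace X) C = hmap (@heta X) C] = @Dset X /\
  (forall (Z : topologicalType) (f : Z -> hspace X), continuous f ->
     @heta (hspace X) \o f = hmap (@heta X) \o f ->
     exists! g : Z -> {C : hspace X | @Dset X C},
       continuous (fun z => (proj1_sig (g z) : subspace (@Dset X))) /\
       (fun z => proj1_sig (g z)) = f).
Proof.
have equalizerE : [set C | heta C = hmap (@heta X) C] = @Dset X.
  apply/seteqP; split=> C /=.
    by move=> /heta_hmap_heta_eq /closure_heta_irreducible.
  by move=> /closure_heta_irreducible /heta_hmap_heta_eq.
split=> // Z f cf fE.
have Df z : Dset (f z).
  by rewrite -equalizerE /=; exact: (congr1 (fun h => h z) fE).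
exists (fun z => exist _ (f z) (Df z)); split.
  by split=> //; exact: continuous_into_subspace.
move=> g [_ gE]; apply: funext => z; move: (Df z).
by rewrite -gE /=; case: (g z) => C DC DC' /=; apply: eq_exist.
Qed.
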